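(* Let $\mathbb{F}$ be a finite field, let $\ell,h,n,d$ be positive integers, and let $P\subseteq\mathbb{F}[w_1,\dots,w_\ell]$ be a maximal ideal such that $\mathbb{E}=\mathbb{F}[w_1,\dots,w_\ell]/P$ is a finite field extension of $\mathbb{F}$ of degree $k$, and such that every coset $g+P\in\mathbb{E}$ contains an element of $\mathbb{F}[w_1,\dots,w_\ell]$ of total degree at most $h$. Let $\{g_1+P,\dots,g_k+P\}$ be a basis of $\mathbb{E}$ over $\mathbb{F}$, for each $i$ let $g_i'\in g_i+P$ have total degree at most $h$, and let $\varphi:\mathbb{E}\to\mathbb{F}^{\le h}[w_1,\dots,w_\ell]$ be the $\mathbb{F}$-linear map with $\varphi(g_i+P)=g_i'$ for all $i$ (applied coordinate-wise to vectors). Let $\widehat H:S\to\mathbb{E}^n$ be a hitting set generator with density $1-\delta$ for $n$-variate polynomials of degree at most $d$ over $\mathbb{E}$. Then $H=\varphi\circ\widehat H:S\to(\mathbb{F}^{\le h}[w_1,\dots,w_\ell])^n$ is a polynomial hitting set generator with density $1-\delta$ for $n$-variate polynomials of degree at most $d$ over $\mathbb{F}$ with $\ell$-variate polynomial evaluation points of degree at most $h$.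
   Context: $\mathbb{F}^{\le h}[w_1,\dots,w_\ell]$ denotes the polynomials in $w_1,\dots,w_\ell$ over $\mathbb{F}$ of total degree at most $h$. A hitting set generator (HSG) with density $1-\delta$ for $n$-variate polynomials of degree at most $d$ over a field $\mathbb{E}$ is a map $H:T\to\mathbb{E}^n$ from a finite nonempty set $T$ such that for every nonzero $f\in\mathbb{E}[x_1,\dots,x_n]$ of total degree at most $d$, $\Pr_{t\in T}[f(H(t))\neq 0]\ge 1-\delta$ ($t$ uniform). A polynomial hitting set generator (PHSG) with density $1-\delta$ for $n$-variate polynomials of degree at most $d$ over $\mathbb{F}$ with $\ell$-variate polynomial evaluation points of degree at most $h$ is a map $H:T\to(\mathbb{F}^{\le h}[w_1,\dots,w_\ell])^n$ from a finite nonempty set $T$ such that for every nonzero $f\in\mathbb{F}[x_1,\dots,x_n]$ of total degree at most $d$, $\Pr_{y\in T}[f(H(y))=0]\le\delta$, where $f(H(y))\in\mathbb{F}[w_1,\dots,w_\ell]$ is the composed polynomial and $y$ is uniform in $T$. Its seed length is $\log|T|$. *)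

From HB Require Import structures.
From mathcomp Require Import all_boot all_order all_algebra all_field.
From mathcomp Require Import mpoly.
Set Implicit Arguments. Unset Strict Implicit. Unset Printing Implicit Defensive.
Import GRing.Theory Num.Theory.
Local Open Scope ring_scope.

(* total degree at most d  <->  msize p <= d.+1  (msize = 1 + degree, msize 0 = 0) *)
Definition deg_le (m : nat) (K : ringType) (d : nat) (p : {mpoly K[m]}) : bool :=
  (msize p <= d.+1)%N.

Definition is_HSG (R : realFieldType) (E : fieldType) (n d : nat) (delta : R)
    (S : finType) (H : S -> n.-tuple E) : Prop :=
  (0 < #|S|)%N /\
  forall f : {mpoly E[n]}, f != 0 -> deg_le d f ->
    1 - delta <= (#|[set t : S | meval (tnth (H t)) f != 0]|%:R / #|S|%:R).

Definition is_PHSG (R : realFieldType) (F : fieldType) (n d l h : nat) (delta : R)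
    (T : finType) (H : T -> n.-tuple {mpoly F[l]}) : Prop :=
  [/\ (0 < #|T|)%N,
      (forall y i, deg_le h (tnth (H y) i)) &
      forall f : {mpoly F[n]}, f != 0 -> deg_le d f ->
        (#|[set y : T | f \mPo (H y) == 0]|%:R / #|T|%:R) <= delta].

(** The basis lift [phi] is a section of the quotient map [pi] (both are
    linear and agree on a basis), and its values have degree at most [h]
    because the set of such polynomials is a subspace containing the lifted
    basis.  For a polynomial [f] over [F] and a seed [s], applying the algebra
    morphism [pi] to [f(phi(Hhat s))] gives [f(Hhat s)] evaluated over [E].
    Hence every seed at which the composed polynomial vanishes is a seed at
    which [Hhat] fails to hit [f], and the failure probability is at most
    [delta]. *)

From HB Require Import structures.
From mathcomp Require Import all_boot all_order all_algebra all_field.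
From mathcomp Require Import mpoly.
Set Implicit Arguments. Unset Strict Implicit. Unset Printing Implicit Defensive.
Import Order.TTheory GRing.Theory Num.Theory.
Local Open Scope ring_scope.

Section DegreeBound.
Variables (l h : nat) (R : nzRingType).

Lemma deg_leZ (c : R) (p : {mpoly R[l]}) : deg_le h p -> deg_le h (c *: p).
Proof. exact: leq_trans (msizeZ_le p c). Qed.

Lemma deg_le_sum (I : Type) (r : seq I) (P : pred I) (F : I -> {mpoly R[l]}) :
  (forall i, P i -> deg_le h (F i)) -> deg_le h (\sum_(i <- r | P i) F i).
Proof.
move=> degF; apply: (big_ind (deg_le h)) => //; first by rewrite /deg_le msize0.
rewrite /deg_le => p q hp hq; apply: leq_trans (msizeD_le p q) _.
by rewrite geq_max hp hq.
Qed.

End DegreeBound.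

Section BasisLift.
Variables (K : fieldType) (V : vectType K) (m : nat) (X : m.-tuple V).
Hypothesis basisX : basis_of fullv X.

Lemma linear_coord_basis (W : lmodType K) (phi : {linear V -> W}) v :
  phi v = \sum_i coord X i v *: phi X`_i.
Proof.
rewrite {1}(coord_basis basisX (memvf v)) linear_sum.
by apply: eq_bigr => i _; rewrite linearZ.
Qed.

Lemma linear_cancel_basis (W : lmodType K) (phi : {linear V -> W})
    (pi : {linear W -> V}) :
  (forall i : 'I_m, pi (phi X`_i) = X`_i) -> cancel phi pi.
Proof.
move=> piphiX v; rewrite linear_coord_basis linear_sum.
rewrite {2}(coord_basis basisX (memvf v)).
by apply: eq_bigr => i _; rewrite linearZ piphiX.
Qed.

Lemma deg_le_linear_basis (l h : nat) (phi : {linear V -> {mpoly K[l]}}) v :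
  (forall i : 'I_m, deg_le h (phi X`_i)) -> deg_le h (phi v).
Proof.
move=> degX; rewrite linear_coord_basis.
by apply: deg_le_sum => i _; apply: deg_leZ.
Qed.

End BasisLift.

Section MapMPolyInj.
Variables (n : nat) (R S : nzRingType) (f : {rmorphism R -> S}).
Hypothesis inj_f : injective f.

Lemma map_mpoly_eq0 (p : {mpoly R[n]}) : (map_mpoly f p == 0) = (p == 0).
Proof. by rewrite -!msupp_eq0 -!size_eq0 (perm_size (msupp_map_mpoly p inj_f)). Qed.

Lemma msize_map_mpoly (p : {mpoly R[n]}) : msize (map_mpoly f p) = msize p.
Proof. by rewrite !msizeE (perm_big _ (msupp_map_mpoly p inj_f)). Qed.

End MapMPolyInj.

Lemma lrmorph_comp_mpoly (F : comNzRingType) (A : lalgType F) (n l : nat)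
    (pi : {lrmorphism {mpoly F[l]} -> A}) (f : {mpoly F[n]})
    (t : n.-tuple {mpoly F[l]}) :
  pi (f \mPo t) = (map_mpoly (in_alg A) f).@[fun i => pi (tnth t i)].
Proof.
rewrite comp_mpolyEX raddf_sum [in RHS](mpolyE f).
rewrite (raddf_sum (map_mpoly (in_alg A))) raddf_sum /=.
apply: eq_bigr => m _; rewrite linearZ map_mpolyZ mevalZ mulr_algl /=.
rewrite comp_mpolyX map_mpolyX mevalX rmorph_prod.
by congr (_ *: _); apply: eq_bigr => i _; rewrite rmorphXn.
Qed.

Lemma card_ratio_le_setC (R : realFieldType) (T : finType) (A B : {set T})
    (delta : R) :
  (0 < #|T|)%N -> B \subset ~: A ->
  1 - delta <= #|A|%:R / #|T|%:R -> #|B|%:R / #|T|%:R <= delta.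
Proof.
move=> T0 sBA hitA; have T0R : (0 : R) < #|T|%:R by rewrite ltr0n.
have cardB : (#|B| <= #|T| - #|A|)%N by rewrite -(cardsC A) addKn subset_leq_card.
apply: le_trans (_ : (#|T| - #|A|)%N%:R / #|T|%:R <= _).
  by rewrite ler_pM2r ?invr_gt0 // ler_nat.
by rewrite natrB ?max_card // mulrBl divff ?gt_eqF // lerBlDr addrC -lerBlDr.
Qed.

Theorem claim4p1
  (F : finFieldType) (l h n d k : nat)
  (hl : (0 < l)%N) (hh : (0 < h)%N) (hn : (0 < n)%N) (hd : (0 < d)%N)
  (E : fieldExtType F)
  (* E = F[w_1..w_l]/P : pi is the quotient map, P = ker pi (maximal, E a field) *)
  (pi : {lrmorphism {mpoly F[l]} -> E})
  (pi_surj : forall e : E, exists p : {mpoly F[l]}, pi p = e)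
  (hk : \dim (fullv : {vspace E}) = k)
  (hcoset : forall e : E, exists p : {mpoly F[l]}, deg_le h p /\ pi p = e)
  (g g' : 'I_k -> {mpoly F[l]})
  (hbasis : basis_of fullv [seq pi (g i) | i <- enum 'I_k])
  (hg'deg : forall i, deg_le h (g' i))
  (hg'coset : forall i, pi (g' i) = pi (g i))
  (phi : {linear E -> {mpoly F[l]}})
  (hphi : forall i, phi (pi (g i)) = g' i)
  (R : realFieldType) (delta : R) (S : finType) (Hhat : S -> n.-tuple E) :
  @is_HSG R E n d delta S Hhat ->
  @is_PHSG R F n d l h delta S (fun s : S => [tuple of map phi (Hhat s)]).
Proof.
move=> [S0 Hhat_hits].
pose X : k.-tuple E := [tuple pi (g i) | i < k].
have phiK : cancel phi pi.
  apply: (@linear_cancel_basis _ _ _ X) => // i.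
  by rewrite /X nth_mktuple hphi; apply: hg'coset.
split=> // [s i | f f0 deg_f].
  rewrite tnth_map; apply: (@deg_le_linear_basis _ _ _ X) => // j.
  by rewrite /X nth_mktuple hphi.
have inj_inalg : injective (in_alg E) by apply: fmorph_inj.
pose fE := map_mpoly (in_alg E) f.
have fE0 : fE != 0 by rewrite map_mpoly_eq0.
have deg_fE : deg_le d fE by rewrite /deg_le msize_map_mpoly.
apply: card_ratio_le_setC (Hhat_hits fE fE0 deg_fE) => //.
apply/subsetP => s; rewrite !inE negbK => /eqP vanish.
have := lrmorph_comp_mpoly pi f [tuple of map phi (Hhat s)].
rewrite vanish raddf0 => ->; apply/eqP/meval_eq => i.
by rewrite tnth_map phiK.
Qed.
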